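(* Let $\nu\in\mathbb C$. Then $J_\nu(\cdot;q^2)$ and $J_{\nu+1}(\cdot;q^2)$ have no common zero in $\mathbb C\setminus\{0\}$.
   Context: Fix $0<q<1$. For $a\in\mathbb C$ put $(a;q)_0=1$, $(a;q)_k=\prod_{i=0}^{k-1}(1-aq^i)$, $(a;q)_\infty=\prod_{i\ge0}(1-aq^i)$. For $\nu\in\mathbb C$ and $x\in\mathbb C\setminus\{0\}$ the Hahn–Exton $q$-Bessel function is $$J_\nu(x;q^2)=\frac{x^\nu}{(q^2;q^2)_\infty}\sum_{k=0}^\infty\frac{(-1)^kq^{k(k+1)}(q^{2\nu+2k+2};q^2)_\infty}{(q^2;q^2)_k}\,x^{2k},$$ with $x^\nu=\exp(\nu\operatorname{Log}x)$ (principal branch). *)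

From Stdlib Require Import Reals.
From Coquelicot Require Import Coquelicot.
Open Scope R_scope.

Definition cexp (z : C) : C :=
  (exp (Re z) * cos (Im z), exp (Re z) * sin (Im z)).

(* principal argument, in (-PI, PI] (value at 0 irrelevant) *)
Definition carg (z : C) : R :=
  if Rle_dec 0 (Im z) then acos (Re z / Cmod z) else - acos (Re z / Cmod z).

Definition clog (z : C) : C := (ln (Cmod z), carg z).

Definition cpow (x nu : C) : C := cexp (Cmult nu (clog x)).

Fixpoint qpoch (a : C) (b : R) (n : nat) : C :=
  match n with
  | O => RtoC 1
  | S k => Cmult (qpoch a b k) (Cminus (RtoC 1) (Cmult a (RtoC (b ^ k))))
  end.

Definition clim (u : nat -> C) : C :=
  (real (Lim_seq (fun n => Re (u n))), real (Lim_seq (fun n => Im (u n)))).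

Definition qpoch_inf (a : C) (b : R) : C := clim (qpoch a b).

Definition cseries (u : nat -> C) : C :=
  (Series (fun n => Re (u n)), Series (fun n => Im (u n))).

Definition hahn_exton_J (q : R) (nu x : C) : C :=
  Cmult (Cdiv (cpow x nu) (qpoch_inf (RtoC (q ^ 2)) (q ^ 2)))
    (cseries (fun k =>
       Cmult
         (Cdiv
            (Cmult (RtoC ((-1) ^ k * q ^ (k * (k + 1))))
               (qpoch_inf
                  (cexp (Cmult (Cplus (Cmult (RtoC 2) nu) (RtoC (INR (2 * k + 2))))
                               (RtoC (ln q))))
                  (q ^ 2)))
            (qpoch (RtoC (q ^ 2)) (q ^ 2) k))
         (Cpow x (2 * k)))).

(* Write J_nu(x) = x^nu / (q^2;q^2)_oo * F_nu(x), where F_nu(x) = sum_k c_k(nu) x^(2k) is an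
   entire even power series whose k-th coefficient carries the factor (q^(2nu+2k+2);q^2)_oo.
   The recursion (a;q^2)_oo = (1 - a) (a q^2;q^2)_oo yields the contiguous relations
     F_nu(x) = F_(nu+1)(x) - q^(2nu+2) F_(nu+1)(q x),
     F_nu(x) - F_nu(q x) = - q^2 x^2 F_(nu+1)(q x),
   so a common zero x <> 0 of F_nu and F_(nu+1) is also a common zero q x.  Hence F_(nu+1)
   vanishes at every q^n x, and by the identity theorem all its coefficients vanish.  They do not:
   (a;q^2)_oo <> 0 as soon as |a| < 1, and the argument q^(2nu+2k+4) of the factor in the k-th
   coefficient of F_(nu+1) tends to 0. *)

From Stdlib Require Import Reals Lra Lia Psatz FunctionalExtensionality.
From Coquelicot Require Import Coquelicot.
Open Scope R_scope.

Lemma pow_le_pow_anti (x : R) (m n : nat) : 0 <= x <= 1 -> (m <= n)%nat -> x ^ n <= x ^ m.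
Proof.
  intros Hx Hmn. replace n with (m + (n - m))%nat by lia. rewrite pow_add.
  assert (x ^ (n - m) <= 1) by (rewrite <- (pow1 (n - m)); apply pow_incr; lra).
  pose proof (pow_le x m (proj1 Hx)). nra.
Qed.

Lemma pow_le_1 (x : R) (n : nat) : 0 <= x <= 1 -> x ^ n <= 1.
Proof. intros Hx. apply (pow_le_pow_anti x 0 n Hx). lia. Qed.

Lemma pow_mult_small (x c eps : R) : 0 <= x < 1 -> 0 <= c -> 0 < eps -> exists N, c * x ^ N < eps.
Proof.
  intros Hx Hc Heps.
  destruct (pow_lt_1_zero x ltac:(rewrite Rabs_right; lra) (eps / (c + 1))
              ltac:(apply Rdiv_lt_0_compat; lra)) as [N HN].
  exists N. specialize (HN N (le_n N)). rewrite Rabs_right in HN by (apply Rle_ge, pow_le; lra).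
  apply (Rmult_lt_compat_l (c + 1)) in HN; [|lra].
  replace ((c + 1) * (eps / (c + 1))) with eps in HN by (field; lra).
  pose proof (pow_le x N (proj1 Hx)). nra.
Qed.

Lemma exp_le_exp_compat (x y : R) : x <= y -> exp x <= exp y.
Proof. intros [H|H]; [left; apply exp_increasing, H | rewrite H; lra]. Qed.

Lemma im_le_Cmod (z : C) : Rabs (Im z) <= Cmod z.
Proof. unfold Re, Im. pose proof (Rmax_Cmod z); pose proof (Rmax_r (Rabs (fst z)) (Rabs (snd z))); lra. Qed.

Lemma Cmod_le_Re_Im (z : C) : Cmod z <= Rabs (Re z) + Rabs (Im z).
Proof.
  destruct z as [x y]; unfold Cmod, Re, Im; simpl.
  pose proof (Rabs_pos x); pose proof (Rabs_pos y).
  rewrite <- (sqrt_Rsqr (Rabs x + Rabs y)) by lra.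
  apply sqrt_le_1_alt. rewrite Rsqr_plus, <- !Rsqr_abs. unfold Rsqr. nra.
Qed.

Lemma Cmod_pow_le_1 (x : C) (n : nat) : Cmod x <= 1 -> Cmod (x ^ n) <= 1.
Proof. intros Hx. rewrite Cmod_pow. apply pow_le_1. split; [apply Cmod_ge_0 | exact Hx]. Qed.

(** * Complex series and limits, componentwise *)

Definition is_cseries (u : nat -> C) (l : C) :=
  is_series (fun n => Re (u n)) (Re l) /\ is_series (fun n => Im (u n)) (Im l).

Lemma is_cseries_unique (u : nat -> C) (l : C) : is_cseries u l -> cseries u = l.
Proof.
  intros [Hre Him]. destruct l as [x y]. unfold cseries.
  now rewrite (is_series_unique _ _ Hre), (is_series_unique _ _ Him).
Qed.

Lemma is_cseries_ext (u v : nat -> C) (l : C) :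
  (forall n, u n = v n) -> is_cseries u l -> is_cseries v l.
Proof.
  intros E [Hre Him]; split;
    [apply (is_series_ext (fun n => Re (u n))) | apply (is_series_ext (fun n => Im (u n)))];
    auto; intros n; now rewrite E.
Qed.

Lemma is_series_ext_eq (a b : nat -> R) (la lb : R) :
  (forall n, a n = b n) -> la = lb -> is_series a la -> is_series b lb.
Proof. intros E <-. apply is_series_ext, E. Qed.

Lemma is_series_lin (a b : nat -> R) (la lb al be : R) :
  is_series a la -> is_series b lb ->
  is_series (fun n => al * a n + be * b n) (al * la + be * lb).
Proof.
  intros Ha Hb. exact (is_series_plus _ _ _ _ (is_series_scal al _ _ Ha) (is_series_scal be _ _ Hb)).
Qed.

Lemma is_cseries_lin (u v : nat -> C) (l m c d : C) :
  is_cseries u l -> is_cseries v m ->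
  is_cseries (fun n => c * u n + d * v n)%C (c * l + d * m)%C.
Proof.
  intros [Hu1 Hu2] [Hv1 Hv2].
  pose proof (is_series_plus _ _ _ _ (is_series_lin _ _ _ _ (Re c) (- Im c) Hu1 Hu2)
                (is_series_lin _ _ _ _ (Re d) (- Im d) Hv1 Hv2)) as Hre.
  pose proof (is_series_plus _ _ _ _ (is_series_lin _ _ _ _ (Re c) (Im c) Hu2 Hu1)
                (is_series_lin _ _ _ _ (Re d) (Im d) Hv2 Hv1)) as Him.
  split; [refine (is_series_ext_eq _ _ _ _ _ _ Hre) | refine (is_series_ext_eq _ _ _ _ _ _ Him)];
    try intros n; unfold plus, Re, Im; simpl; ring.
Qed.

Lemma is_cseries_incr_1 (u : nat -> C) (l : C) :
  is_cseries u l -> is_cseries (fun k => u (S k)) (l - u O)%C.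
Proof.
  intros [Hre Him]; split;
    [apply (is_series_incr_1 (fun n => Re (u n))); replace (plus _ _) with (Re l)
    |apply (is_series_incr_1 (fun n => Im (u n))); replace (plus _ _) with (Im l)];
    auto; unfold plus, Re, Im; simpl; ring.
Qed.

Lemma is_cseries_skip_zeros (u : nat -> C) (l : C) (m : nat) :
  (forall k, (k < m)%nat -> u k = 0) -> is_cseries u l -> is_cseries (fun k => u (m + k)%nat) l.
Proof.
  intros Hz Hu. induction m as [|m IH]; [exact Hu|].
  pose proof (is_cseries_incr_1 _ _ (IH (fun k Hk => Hz k ltac:(lia)))) as H.
  cbv beta in H. rewrite Nat.add_0_r, (Hz m ltac:(lia)) in H.
  replace (l - 0)%C with l in H by ring.
  apply (is_cseries_ext _ _ _ (fun k => f_equal u (eq_sym (Nat.add_succ_comm m k))) H).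
Qed.

Lemma is_cseries_Cmod (u : nat -> C) : ex_series (fun n => Cmod (u n)) -> is_cseries u (cseries u).
Proof.
  intros H; split; apply Series_correct;
    [apply (ex_series_le (fun n => Re (u n)) (fun n => Cmod (u n)))
    |apply (ex_series_le (fun n => Im (u n)) (fun n => Cmod (u n)))];
    auto; intros n; [apply re_le_Cmod | apply im_le_Cmod].
Qed.

Lemma Cmod_cseries_le (u : nat -> C) :
  ex_series (fun n => Cmod (u n)) -> Cmod (cseries u) <= 2 * Series (fun n => Cmod (u n)).
Proof.
  intros H.
  assert (Hpart : forall f : C -> R, (forall z, Rabs (f z) <= Cmod z) ->
            Rabs (Series (fun n => f (u n))) <= Series (fun n => Cmod (u n))).
  { intros f Hf.
    assert (Hf' : ex_series (fun n => Rabs (f (u n)))).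
    { apply (ex_series_le (fun n => Rabs (f (u n))) (fun n => Cmod (u n))); auto.
      intros n. change (Rabs (Rabs (f (u n))) <= Cmod (u n)). now rewrite Rabs_Rabsolu. }
    eapply Rle_trans; [apply Series_Rabs, Hf'|].
    apply Series_le; auto. intros n; split; [apply Rabs_pos | apply Hf]. }
  eapply Rle_trans; [apply Cmod_le_Re_Im|].
  pose proof (Hpart Re re_le_Cmod); pose proof (Hpart Im im_le_Cmod). unfold cseries; simpl. lra.
Qed.

Definition is_clim (u : nat -> C) (l : C) :=
  is_lim_seq (fun n => Re (u n)) (Re l) /\ is_lim_seq (fun n => Im (u n)) (Im l).

Lemma is_clim_unique (u : nat -> C) (l : C) : is_clim u l -> clim u = l.
Proof.
  intros [Hre Him]. destruct l as [x y]. unfold clim.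
  now rewrite (is_lim_seq_unique _ _ Hre), (is_lim_seq_unique _ _ Him).
Qed.

Lemma is_clim_ext (u v : nat -> C) (l : C) :
  (forall n, u n = v n) -> is_clim u l -> is_clim v l.
Proof.
  intros E [Hre Him]; split;
    [apply (is_lim_seq_ext (fun n => Re (u n))) | apply (is_lim_seq_ext (fun n => Im (u n)))];
    auto; intros n; now rewrite E.
Qed.

Lemma is_clim_incr_1 (u : nat -> C) (l : C) : is_clim (fun n => u (S n)) l -> is_clim u l.
Proof. intros [Hre Him]; split; apply is_lim_seq_incr_1; assumption. Qed.

Lemma is_clim_scal_l (u : nat -> C) (l c : C) :
  is_clim u l -> is_clim (fun n => c * u n)%C (c * l)%C.
Proof.
  intros [Hre Him]; split.
  - exact (is_lim_seq_minus' _ _ _ _ (is_lim_seq_scal_l _ (Re c) _ Hre) (is_lim_seq_scal_l _ (Im c) _ Him)).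
  - exact (is_lim_seq_plus' _ _ _ _ (is_lim_seq_scal_l _ (Re c) _ Him) (is_lim_seq_scal_l _ (Im c) _ Hre)).
Qed.

Lemma is_lim_seq_Cmod_sqr (u : nat -> C) (l : C) :
  is_clim u l -> is_lim_seq (fun n => Cmod (u n) ^ 2) (Cmod l ^ 2).
Proof.
  intros [Hre Him].
  pose proof (is_lim_seq_plus' _ _ _ _ (is_lim_seq_mult' _ _ _ _ Hre Hre) (is_lim_seq_mult' _ _ _ _ Him Him)) as H.
  rewrite Cmod2_alt. apply (is_lim_seq_ext _ _ _ (fun n => eq_sym (Cmod2_alt (u n)))).
  replace (Re l ^ 2 + Im l ^ 2) with (Re l * Re l + Im l * Im l) by ring.
  apply (is_lim_seq_ext _ _ _ (fun n => ltac:(ring) : Re (u n) * Re (u n) + Im (u n) * Im (u n) = Re (u n) ^ 2 + Im (u n) ^ 2)).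
  exact H.
Qed.

Lemma Cmod_is_clim_le (u : nat -> C) (l : C) (M : R) :
  is_clim u l -> (forall n, Cmod (u n) <= M) -> Cmod l <= M.
Proof.
  intros H B.
  assert (HM : 0 <= M) by (eapply Rle_trans; [apply Cmod_ge_0 | apply (B O)]).
  assert (Hsq : Rbar_le (Cmod l ^ 2) (M ^ 2)).
  { apply (is_lim_seq_le (fun n => Cmod (u n) ^ 2) (fun _ => M ^ 2) _ _); [| apply is_lim_seq_Cmod_sqr, H | apply is_lim_seq_const].
    intros n. pose proof (B n); pose proof (Cmod_ge_0 (u n)). nra. }
  simpl in Hsq. pose proof (Cmod_ge_0 l). nra.
Qed.

Lemma Cmod_is_clim_ge (u : nat -> C) (l : C) (m : R) :
  is_clim u l -> 0 <= m -> (forall n, m <= Cmod (u n)) -> m <= Cmod l.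
Proof.
  intros H Hm B.
  assert (Hsq : Rbar_le (m ^ 2) (Cmod l ^ 2)).
  { apply (is_lim_seq_le (fun _ => m ^ 2) (fun n => Cmod (u n) ^ 2) _ _); [| apply is_lim_seq_const | apply is_lim_seq_Cmod_sqr, H].
    intros n. pose proof (B n). nra. }
  simpl in Hsq. pose proof (Cmod_ge_0 l). nra.
Qed.

Lemma sum_n_telescope (f : nat -> R) (n : nat) :
  sum_n (fun k => f (S k) - f k) n = f (S n) - f O.
Proof.
  induction n as [|n IH]; [now rewrite sum_O|].
  rewrite sum_Sn, IH. unfold plus; simpl. ring.
Qed.

Lemma is_clim_summable_incr (u : nat -> C) :
  ex_series (fun n => Cmod (u (S n) - u n)%C) ->
  is_clim u (u O + cseries (fun n => u (S n) - u n))%C.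
Proof.
  intros H. destruct (is_cseries_Cmod _ H) as [Hre Him].
  apply is_clim_incr_1. split.
  - apply (is_lim_seq_ext (fun n => Re (u O) + sum_n (fun k => Re (u (S k)) - Re (u k)) n)).
    + intros n. rewrite (sum_n_telescope (fun k => _ (u k))). ring.
    + apply is_lim_seq_plus'; [apply is_lim_seq_const | exact Hre].
  - apply (is_lim_seq_ext (fun n => Im (u O) + sum_n (fun k => Im (u (S k)) - Im (u k)) n)).
    + intros n. rewrite (sum_n_telescope (fun k => _ (u k))). ring.
    + apply is_lim_seq_plus'; [apply is_lim_seq_const | exact Him].
Qed.

Lemma Cmult_eq0_cancel_l (a z : C) : a <> 0 -> (a * z)%C = 0 -> z = 0.
Proof. intros Ha H. replace z with (/ a * (a * z))%C by (field; exact Ha). rewrite H. ring. Qed.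

Lemma Cmod_mult_pow (a : C) (b : R) (n : nat) : 0 <= b -> Cmod (a * b ^ n)%C = Cmod a * b ^ n.
Proof.
  intros Hb. rewrite Cmod_mult, Cmod_pow, Cmod_R, Rabs_right; [reflexivity | lra].
Qed.

(** * q-Pochhammer symbols *)

Lemma qpoch_S (a : C) (b : R) (n : nat) : qpoch a b (S n) = (qpoch a b n * (1 - a * b ^ n))%C.
Proof. simpl. now rewrite RtoC_pow. Qed.

Lemma qpoch_S_shift (a : C) (b : R) (n : nat) :
  qpoch a b (S n) = ((1 - a) * qpoch (a * b) b n)%C.
Proof.
  revert a; induction n as [|n IH]; intros a.
  - simpl. ring.
  - rewrite qpoch_S, IH, qpoch_S. simpl. ring.
Qed.

Lemma qpoch_neq0 (a : C) (b : R) (n : nat) :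
  (forall i, (i < n)%nat -> (a * b ^ i)%C <> 1) -> qpoch a b n <> 0.
Proof.
  induction n as [|n IH]; intros Hne.
  - simpl. apply C1_nz.
  - rewrite qpoch_S. apply Cmult_neq_0; [apply IH; intros i Hi; apply Hne; lia|].
    intros E. apply (Hne n ltac:(lia)). replace (a * b ^ n)%C with (1 - (1 - a * b ^ n))%C by ring.
    rewrite E. ring.
Qed.

Lemma Cmod_qpoch_diag_ge (b : R) (n : nat) : 0 < b < 1 -> (1 - b) ^ n <= Cmod (qpoch b b n).
Proof.
  intros Hb; induction n as [|n IH].
  - simpl. rewrite Cmod_1; lra.
  - rewrite qpoch_S, Cmod_mult, <- Cpow_S, <- RtoC_pow, <- RtoC_minus, Cmod_R.
    pose proof (pow_le_1 b (S n) ltac:(lra)). pose proof (pow_le (1 - b) n ltac:(lra)).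
    pose proof (pow_le_pow_anti b 1 (S n) ltac:(lra) ltac:(lia)).
    rewrite Rabs_right by lra. simpl (_ ^ S n). simpl in *. nra.
Qed.

Section QPochhammer.

Variable b : R.
Hypothesis hb : 0 <= b < 1.

Lemma Cmod_qpoch_le_partial (a : C) (n : nat) :
  Cmod (qpoch a b n) <= exp (Cmod a * (1 - b ^ n) / (1 - b)).
Proof.
  induction n as [|n IH].
  - simpl. rewrite Cmod_1. replace (Cmod a * (1 - 1) / (1 - b)) with 0 by (field; lra).
    rewrite exp_0; lra.
  - rewrite qpoch_S, Cmod_mult.
    replace (Cmod a * (1 - b ^ S n) / (1 - b)) with (Cmod a * (1 - b ^ n) / (1 - b) + Cmod a * b ^ n)
      by (simpl; field; lra).
    rewrite exp_plus.
    assert (Hfac : Cmod (1 - a * b ^ n)%C <= exp (Cmod a * b ^ n)).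
    { eapply Rle_trans; [apply Cmod_triangle|].
      rewrite Cmod_opp, Cmod_1, Cmod_mult_pow by lra. apply exp_ineq1_le. }
    apply Rmult_le_compat; auto using Cmod_ge_0.
Qed.

Lemma Cmod_qpoch_le (a : C) (n : nat) : Cmod (qpoch a b n) <= exp (Cmod a / (1 - b)).
Proof.
  eapply Rle_trans; [apply Cmod_qpoch_le_partial|]. apply exp_le_exp_compat.
  pose proof (Cmod_ge_0 a); pose proof (pow_le b n (proj1 hb)).
  unfold Rdiv. apply Rmult_le_compat_r; [left; apply Rinv_0_lt_compat; lra | nra].
Qed.

Lemma Cmod_qpoch_ge_partial (a : C) (n : nat) : Cmod a <= (1 - b) / 2 ->
  1 - Cmod a * (1 - b ^ n) / (1 - b) <= Cmod (qpoch a b n).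
Proof.
  intros Ha; induction n as [|n IH].
  - simpl. rewrite Cmod_1. replace (Cmod a * (1 - 1) / (1 - b)) with 0 by (field; lra). lra.
  - rewrite qpoch_S, Cmod_mult.
    replace (Cmod a * (1 - b ^ S n) / (1 - b)) with (Cmod a * (1 - b ^ n) / (1 - b) + Cmod a * b ^ n)
      by (simpl; field; lra).
    assert (Hfac : 1 - Cmod a * b ^ n <= Cmod (1 - a * b ^ n)%C).
    { pose proof (Cmod_triangle (1 - a * b ^ n)%C (a * b ^ n)%C) as H.
      replace (1 - a * b ^ n + a * b ^ n)%C with (RtoC 1) in H by ring.
      rewrite Cmod_1, Cmod_mult_pow in H by lra. lra. }
    pose proof (Cmod_ge_0 a); pose proof (pow_le b n (proj1 hb)); pose proof (pow_le_1 b n ltac:(lra)).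
    set (E := Cmod a * (1 - b ^ n) / (1 - b)) in *.
    assert (HE : 0 <= E) by (apply Rmult_le_pos; [nra | left; apply Rinv_0_lt_compat; lra]).
    assert (Cmod a * b ^ n <= 1 / 2) by (assert (Cmod a <= 1 / 2) by lra; nra).
    assert (0 <= E * (Cmod a * b ^ n)) by (apply Rmult_le_pos; nra).
    pose proof (Cmod_ge_0 (qpoch a b n)).
    apply Rle_trans with ((1 - E) * (1 - Cmod a * b ^ n)); [nra|].
    destruct (Rle_lt_dec 0 (1 - E)); [apply Rmult_le_compat; lra | nra].
Qed.

Lemma Cmod_qpoch_ge_half (a : C) (n : nat) : Cmod a <= (1 - b) / 2 -> 1 / 2 <= Cmod (qpoch a b n).
Proof.
  intros Ha. eapply Rle_trans; [|apply Cmod_qpoch_ge_partial, Ha].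
  pose proof (Cmod_ge_0 a); pose proof (pow_le b n (proj1 hb)).
  assert (Cmod a * (1 - b ^ n) / (1 - b) <= 1 / 2); [|lra].
  apply Rmult_le_reg_r with (1 - b); [lra|]. unfold Rdiv. rewrite Rmult_assoc, Rinv_l by lra. nra.
Qed.

Lemma qpoch_cvg (a : C) : is_clim (qpoch a b) (qpoch_inf a b).
Proof.
  assert (Hincr : forall n, Cmod (qpoch a b (S n) - qpoch a b n)%C <= exp (Cmod a / (1 - b)) * Cmod a * b ^ n).
  { intros n. rewrite qpoch_S.
    replace (qpoch a b n * (1 - a * b ^ n) - qpoch a b n)%C with (- (qpoch a b n * (a * b ^ n)))%C by ring.
    rewrite Cmod_opp, Cmod_mult, Cmod_mult_pow, <- Rmult_assoc by lra.
    pose proof (Cmod_ge_0 a); pose proof (pow_le b n (proj1 hb)).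
    apply Rmult_le_compat_r; [lra|]. apply Rmult_le_compat_r; [lra | apply Cmod_qpoch_le]. }
  assert (Hsum : ex_series (fun n => Cmod (qpoch a b (S n) - qpoch a b n)%C)).
  { apply (ex_series_le (fun n => Cmod (qpoch a b (S n) - qpoch a b n)%C) (fun n => exp (Cmod a / (1 - b)) * Cmod a * b ^ n)).
    - intros n. change (Rabs (Cmod (qpoch a b (S n) - qpoch a b n)%C) <= exp (Cmod a / (1 - b)) * Cmod a * b ^ n).
      rewrite Rabs_right by (apply Rle_ge, Cmod_ge_0). apply Hincr.
    - apply (ex_series_scal_l _ (fun n => b ^ n)), ex_series_geom. rewrite Rabs_right; lra. }
  pose proof (is_clim_summable_incr _ Hsum) as H.
  unfold qpoch_inf. rewrite (is_clim_unique _ _ H). exact H.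
Qed.

Lemma qpoch_inf_rec (a : C) : qpoch_inf a b = ((1 - a) * qpoch_inf (a * b) b)%C.
Proof.
  apply is_clim_unique, is_clim_incr_1.
  apply (is_clim_ext (fun n => (1 - a) * qpoch (a * b) b n)%C).
  - intros n. now rewrite qpoch_S_shift.
  - apply is_clim_scal_l, qpoch_cvg.
Qed.

Lemma qpoch_inf_split (a : C) (N : nat) : qpoch_inf a b = (qpoch a b N * qpoch_inf (a * b ^ N) b)%C.
Proof.
  induction N as [|N IH].
  - simpl. replace (a * 1)%C with a by ring. ring.
  - rewrite IH, (qpoch_inf_rec (a * b ^ N)), qpoch_S.
    replace (a * b ^ N * b)%C with (a * b ^ S N)%C by (rewrite Cpow_S; ring). ring.
Qed.

Lemma Cmod_qpoch_inf_le (a : C) : Cmod (qpoch_inf a b) <= exp (Cmod a / (1 - b)).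
Proof. apply (Cmod_is_clim_le _ _ _ (qpoch_cvg a)). apply Cmod_qpoch_le. Qed.

Lemma Cmod_qpoch_inf_ge_half (a : C) : Cmod a <= (1 - b) / 2 -> 1 / 2 <= Cmod (qpoch_inf a b).
Proof.
  intros Ha. apply (Cmod_is_clim_ge _ _ _ (qpoch_cvg a)); [lra|].
  intros n. apply Cmod_qpoch_ge_half, Ha.
Qed.

Lemma qpoch_inf_neq0 (a : C) : (forall n, (a * b ^ n)%C <> 1) -> qpoch_inf a b <> 0.
Proof.
  intros Hne.
  destruct (pow_mult_small b (Cmod a) ((1 - b) / 2) hb (Cmod_ge_0 a) ltac:(lra)) as [N HN].
  rewrite (qpoch_inf_split a N). apply Cmult_neq_0.
  - apply qpoch_neq0. intros i _. apply Hne.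
  - intros E. pose proof (Cmod_qpoch_inf_ge_half (a * b ^ N)%C) as H.
    rewrite Cmod_mult_pow, E, Cmod_0 in H by lra. specialize (H (Rlt_le _ _ HN)). lra.
Qed.

End QPochhammer.

(** * Even power series and the identity theorem *)

Definition even_pseries (c : nat -> C) (y : C) : C := cseries (fun k => c k * y ^ (2 * k))%C.

Lemma ex_series_even_pseries_gauss (q rho M : R) (c : nat -> C) :
  0 < q < 1 -> 0 <= rho -> (forall k, Cmod (c k) <= M * (q ^ (k * (k + 1)) * rho ^ k)) ->
  forall x, ex_series (fun k => Cmod (c k * x ^ (2 * k))%C).
Proof.
  intros Hq Hrho Hc x.
  assert (HM : 0 <= M) by (pose proof (Hc O); pose proof (Cmod_ge_0 (c O)); simpl in *; lra).
  set (r := Cmod x ^ 2 * rho).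
  assert (Hr : 0 <= r) by (apply Rmult_le_pos; [apply pow_le, Cmod_ge_0 | exact Hrho]).
  assert (Hterm : forall k, Cmod (c k * x ^ (2 * k))%C <= M * (q ^ (k + 1) * r) ^ k).
  { intros k. rewrite Cmod_mult, Cmod_pow, pow_mult.
    replace ((q ^ (k + 1) * r) ^ k) with (q ^ (k * (k + 1)) * rho ^ k * (Cmod x ^ 2) ^ k)
      by (unfold r; rewrite !Rpow_mult_distr, (Nat.mul_comm k (k + 1)), pow_mult; ring).
    rewrite <- Rmult_assoc. apply Rmult_le_compat_r; [apply pow_le, pow_le, Cmod_ge_0 | apply Hc]. }
  destruct (pow_mult_small q r (1 / 2) ltac:(lra) Hr ltac:(lra)) as [K HK].
  apply (ex_series_incr_n _ K).
  apply (ex_series_le (fun k => Cmod (c (K + k)%nat * x ^ (2 * (K + k)))%C) (fun k => M * (1 / 2) ^ k)).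
  - intros k. change (Rabs (Cmod (c (K + k)%nat * x ^ (2 * (K + k)))%C) <= M * (1 / 2) ^ k).
    rewrite Rabs_right by (apply Rle_ge, Cmod_ge_0).
    eapply Rle_trans; [apply Hterm|]. apply Rmult_le_compat_l; [exact HM|].
    apply Rle_trans with ((1 / 2) ^ (K + k)); [|apply pow_le_pow_anti; [lra | lia]].
    apply pow_incr. split; [apply Rmult_le_pos; [apply pow_le | ]; lra|].
    pose proof (pow_le_pow_anti q K (K + k + 1) ltac:(lra) ltac:(lia)). nra.
  - apply (ex_series_scal_l M (fun k => (1 / 2) ^ k)), ex_series_geom. rewrite Rabs_right; lra.
Qed.

Section EvenPowerSeries.

Variable c : nat -> C.
Hypothesis c_summable : ex_series (fun k => Cmod (c k)).

Lemma ex_series_even_pseries_tail (j : nat) (y : C) :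
  Cmod y <= 1 -> ex_series (fun k => Cmod (c (j + k)%nat * y ^ (2 * k))%C).
Proof.
  intros Hy.
  apply (ex_series_le (fun k => Cmod (c (j + k)%nat * y ^ (2 * k))%C) (fun k => Cmod (c (j + k)%nat))).
  - intros k. change (Rabs (Cmod (c (j + k)%nat * y ^ (2 * k))%C) <= Cmod (c (j + k)%nat)).
    rewrite Rabs_right by (apply Rle_ge, Cmod_ge_0). rewrite Cmod_mult.
    pose proof (Cmod_pow_le_1 y (2 * k) Hy). pose proof (Cmod_ge_0 (c (j + k)%nat)).
    pose proof (Cmod_ge_0 (y ^ (2 * k))). nra.
  - apply (ex_series_incr_n (fun k => Cmod (c k)) j), c_summable.
Qed.

Lemma even_pseries_factor (m : nat) (y : C) : Cmod y <= 1 -> (forall k, (k < m)%nat -> c k = 0) ->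
  even_pseries c y = (y ^ (2 * m) * even_pseries (fun k => c (m + k)%nat) y)%C.
Proof.
  intros Hy Hz.
  pose proof (is_cseries_skip_zeros _ _ m
               (fun k Hk => ltac:(rewrite (Hz k Hk); ring) : (c k * y ^ (2 * k))%C = 0)
               (is_cseries_Cmod (fun k => c k * y ^ (2 * k))%C (ex_series_even_pseries_tail 0 y Hy))) as Hfull.
  pose proof (is_cseries_Cmod _ (ex_series_even_pseries_tail m y Hy)) as Htail.
  pose proof (is_cseries_lin _ _ _ _ (y ^ (2 * m)) 0 Htail Htail) as Hscaled.
  apply is_cseries_unique in Hfull. apply is_cseries_unique in Hscaled.
  unfold even_pseries. rewrite <- Hfull.
  transitivity (y ^ (2 * m) * cseries (fun k => c (m + k)%nat * y ^ (2 * k))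
                + 0 * cseries (fun k => c (m + k)%nat * y ^ (2 * k)))%C; [|ring].
  rewrite <- Hscaled. f_equal. apply functional_extensionality. intros k.
  rewrite Nat.mul_add_distr_l, Cpow_add_r. ring.
Qed.

Lemma Cmod_coef_le_of_root (m : nat) (y : C) :
  Cmod y <= 1 -> y <> 0 -> (forall k, (k < m)%nat -> c k = 0) -> even_pseries c y = 0 ->
  Cmod (c m) <= 2 * (Cmod y ^ 2 * Series (fun k => Cmod (c (S m + k)%nat))).
Proof.
  intros Hy Hy0 Hz Hroot.
  rewrite (even_pseries_factor m y Hy Hz) in Hroot.
  apply Cmult_eq0_cancel_l in Hroot; [|apply Cpow_nz, Hy0].
  pose proof (is_cseries_incr_1 _ _ (is_cseries_Cmod _ (ex_series_even_pseries_tail m y Hy))) as H.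
  fold (even_pseries (fun k => c (m + k)%nat) y) in H. rewrite Hroot in H.
  cbv beta in H. rewrite Nat.add_0_r in H.
  replace (0 - c m * y ^ (2 * 0))%C with (- c m)%C in H by (simpl; ring).
  apply is_cseries_unique in H.
  assert (Hsum : ex_series (fun k => Cmod (c (m + S k)%nat * y ^ (2 * S k))%C)).
  { apply (ex_series_incr_1 (fun k => Cmod (c (m + k)%nat * y ^ (2 * k))%C)).
    apply ex_series_even_pseries_tail, Hy. }
  rewrite <- Cmod_opp, <- H. eapply Rle_trans; [apply Cmod_cseries_le, Hsum|].
  apply Rmult_le_compat_l; [lra|]. rewrite <- Series_scal_l.
  apply Series_le.
  - intros k. split; [apply Cmod_ge_0|].
    rewrite <- plus_n_Sm, Cmod_mult, Cmod_pow. replace (2 * S k)%nat with (2 + 2 * k)%nat by lia.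
    rewrite pow_add.
    pose proof (pow_le_1 (Cmod y) (2 * k) ltac:(split; [apply Cmod_ge_0 | exact Hy])).
    pose proof (pow_le (Cmod y) (2 * k) (Cmod_ge_0 y)). pose proof (pow_le (Cmod y) 2 (Cmod_ge_0 y)).
    assert (0 <= Cmod (c (S (m + k))) * Cmod y ^ 2) by (apply Rmult_le_pos; [apply Cmod_ge_0 | lra]).
    simpl (S m + k)%nat. nra.
  - apply (ex_series_scal_l _ (fun k => Cmod (c (S m + k)%nat))).
    apply (ex_series_incr_n (fun k => Cmod (c k)) (S m)), c_summable.
Qed.

Lemma even_pseries_coef_eq0 :
  (forall eps, 0 < eps -> exists y : C, y <> 0 /\ Cmod y < eps /\ even_pseries c y = 0) ->
  forall m, c m = 0.
Proof.
  intros Hzeros.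
  assert (Hbelow : forall m k, (k < m)%nat -> c k = 0).
  { induction m as [|m IH]; intros k Hk; [lia|].
    destruct (Nat.eq_dec k m) as [->|Hne]; [|apply IH; lia].
    destruct (Ceq_dec (c m) 0) as [E|Hcm]; [exact E|exfalso].
    apply Cmod_gt_0 in Hcm.
    set (T := Series (fun k => Cmod (c (S m + k)%nat))).
    pose proof (Rle_abs T) as HT. pose proof (Rabs_pos T) as HT0.
    set (eps := Rmin 1 (Cmod (c m) / (2 * Rabs T + 1))).
    assert (Heps : 0 < eps) by (apply Rmin_pos; [lra | apply Rdiv_lt_0_compat; lra]).
    destruct (Hzeros eps Heps) as [y [Hy0 [Hyeps Hroot]]].
    assert (Hy1 : Cmod y <= 1) by (pose proof (Rmin_l 1 (Cmod (c m) / (2 * Rabs T + 1))) as Hmin; fold eps in Hmin; lra).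
    pose proof (Cmod_coef_le_of_root m y Hy1 Hy0 IH Hroot) as Hbound. fold T in Hbound.
    assert (Heps_c : eps * (2 * Rabs T + 1) <= Cmod (c m)).
    { pose proof (Rmin_r 1 (Cmod (c m) / (2 * Rabs T + 1))) as H. fold eps in H.
      apply (Rmult_le_compat_r (2 * Rabs T + 1)) in H; [|lra].
      replace (Cmod (c m) / (2 * Rabs T + 1) * (2 * Rabs T + 1)) with (Cmod (c m)) in H by (field; lra). exact H. }
    pose proof (Cmod_ge_0 y).
    assert (Cmod y ^ 2 <= Cmod y) by (simpl; nra).
    assert (Cmod y * (2 * Rabs T + 1) < eps * (2 * Rabs T + 1)) by (apply Rmult_lt_compat_r; lra).
    nra. }
  intros m. apply (Hbelow (S m)). lia.
Qed.

End EvenPowerSeries.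

(** * The Hahn-Exton q-Bessel function *)

Lemma cexp_neq0 (z : C) : cexp z <> 0.
Proof.
  unfold cexp. intros H. injection H as Hre Him.
  pose proof (exp_pos (Re z)). pose proof (sin2_cos2 (Im z)). unfold Rsqr in *.
  assert (cos (Im z) = 0) by (apply Rmult_eq_reg_l with (exp (Re z)); lra).
  assert (sin (Im z) = 0) by (apply Rmult_eq_reg_l with (exp (Re z)); lra).
  nra.
Qed.

Lemma cexp_plus_R (z : C) (r : R) : cexp (z + r)%C = (cexp z * exp r)%C.
Proof.
  unfold cexp, Cplus, Cmult, RtoC, Re, Im; simpl. rewrite Rplus_0_r, exp_plus. f_equal; ring.
Qed.

Definition q_pow (q : R) (s : C) : C := cexp (s * ln q)%C.

Lemma q_pow_plus_nat (q : R) (s : C) (n : nat) : 0 < q -> q_pow q (s + INR n)%C = (q_pow q s * q ^ n)%C.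
Proof.
  intros Hq. unfold q_pow.
  replace ((s + INR n) * ln q)%C with (s * ln q + (INR n * ln q)%R)%C by (rewrite RtoC_mult; ring).
  rewrite cexp_plus_R, <- RtoC_pow, <- Rpower_pow by exact Hq. reflexivity.
Qed.

Section HahnExton.

Variable q : R.
Hypothesis hq0 : 0 < q.
Hypothesis hq1 : q < 1.

Definition J_weight (k : nat) : C :=
  (((-1) ^ k * q ^ (k * (k + 1)))%R / qpoch (q ^ 2)%R (q ^ 2) k)%C.

Definition J_coef (nu : C) (k : nat) : C :=
  (J_weight k * qpoch_inf (q_pow q (2 * nu) * q ^ (2 * k + 2)) (q ^ 2))%C.

Lemma q2_bounds : 0 < q ^ 2 < 1.
Proof. split; nra. Qed.

Lemma hahn_exton_J_eq (nu x : C) :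
  hahn_exton_J q nu x = (cpow x nu / qpoch_inf (q ^ 2)%R (q ^ 2) * even_pseries (J_coef nu) x)%C.
Proof.
  unfold hahn_exton_J, even_pseries. do 2 f_equal. apply functional_extensionality. intros k.
  pose proof (q_pow_plus_nat q (2 * nu) (2 * k + 2) hq0) as E. unfold q_pow in E.
  rewrite E. unfold J_coef, J_weight, q_pow, Cdiv. ring.
Qed.

Lemma qpoch_q2_neq0 (k : nat) : qpoch (q ^ 2)%R (q ^ 2) k <> 0.
Proof.
  pose proof q2_bounds as Hq2. pose proof (Cmod_qpoch_diag_ge (q ^ 2) k Hq2) as Hge.
  pose proof (pow_lt (1 - q ^ 2) k ltac:(lra)).
  intros E. rewrite E, Cmod_0 in Hge. lra.
Qed.

Lemma hahn_exton_prefactor_neq0 (nu x : C) : (cpow x nu / qpoch_inf (q ^ 2)%R (q ^ 2))%C <> 0.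
Proof.
  pose proof q2_bounds as Hq2.
  assert (Hinf : qpoch_inf (q ^ 2)%R (q ^ 2) <> 0).
  { apply qpoch_inf_neq0; [lra|]. intros n E.
    apply (f_equal Cmod) in E. rewrite Cmod_mult_pow, Cmod_R, Cmod_1, Rabs_right in E by lra.
    pose proof (pow_le_1 (q ^ 2) n ltac:(lra)). pose proof (pow_le (q ^ 2) n ltac:(lra)). nra. }
  intros E. apply (cexp_neq0 (nu * clog x)).
  replace (cexp (nu * clog x)) with (cpow x nu / qpoch_inf (q ^ 2)%R (q ^ 2) * qpoch_inf (q ^ 2)%R (q ^ 2))%C
    by (unfold cpow; field; exact Hinf).
  rewrite E. ring.
Qed.

Lemma Cmod_J_weight_le (k : nat) : Cmod (J_weight k) <= q ^ (k * (k + 1)) * (/ (1 - q ^ 2)) ^ k.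
Proof.
  pose proof q2_bounds as Hq2. pose proof (Cmod_qpoch_diag_ge (q ^ 2) k Hq2).
  pose proof (pow_lt (1 - q ^ 2) k ltac:(lra)).
  unfold J_weight. rewrite Cmod_div by apply qpoch_q2_neq0.
  rewrite Cmod_R, Rabs_mult, pow_1_abs, Rmult_1_l, Rabs_right by (apply Rle_ge, pow_le; lra).
  rewrite pow_inv. unfold Rdiv. apply Rmult_le_compat_l; [apply pow_le; lra|].
  apply Rinv_le_contravar; lra.
Qed.

Lemma Cmod_J_coef_le (nu : C) (k : nat) :
  Cmod (J_coef nu k) <= exp (Cmod (q_pow q (2 * nu)) / (1 - q ^ 2)) * (q ^ (k * (k + 1)) * (/ (1 - q ^ 2)) ^ k).
Proof.
  pose proof q2_bounds as Hq2.
  unfold J_coef. rewrite Cmod_mult, (Rmult_comm (exp _)).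
  apply Rmult_le_compat; [apply Cmod_ge_0 | apply Cmod_ge_0 | apply Cmod_J_weight_le|].
  eapply Rle_trans; [apply Cmod_qpoch_inf_le; lra|]. apply exp_le_exp_compat.
  rewrite Cmod_mult_pow by lra. unfold Rdiv. apply Rmult_le_compat_r; [left; apply Rinv_0_lt_compat; lra|].
  pose proof (Cmod_ge_0 (q_pow q (2 * nu))). pose proof (pow_le_1 q (2 * k + 2) ltac:(lra)).
  pose proof (pow_le q (2 * k + 2) ltac:(lra)). nra.
Qed.

Lemma ex_series_J_terms (nu x : C) : ex_series (fun k => Cmod (J_coef nu k * x ^ (2 * k))%C).
Proof.
  pose proof q2_bounds as Hq2.
  apply (ex_series_even_pseries_gauss q (/ (1 - q ^ 2)) (exp (Cmod (q_pow q (2 * nu)) / (1 - q ^ 2))) _ ltac:(lra)); [left; apply Rinv_0_lt_compat; lra|].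
  apply Cmod_J_coef_le.
Qed.

Lemma ex_series_J_coef (nu : C) : ex_series (fun k => Cmod (J_coef nu k)).
Proof.
  apply (ex_series_ext (fun k => Cmod (J_coef nu k * 1 ^ (2 * k))%C)); [|apply ex_series_J_terms].
  intros k. now rewrite Cpow_1_l, Cmult_1_r.
Qed.

Lemma q_pow_double_succ (nu : C) : q_pow q (2 * (nu + 1)) = (q_pow q (2 * nu) * q ^ 2)%C.
Proof.
  rewrite <- q_pow_plus_nat by exact hq0. f_equal. simpl. rewrite RtoC_plus. ring.
Qed.

Lemma J_coef_rec (nu : C) (k : nat) :
  J_coef nu k = ((1 - q_pow q (2 * nu) * q ^ (2 * k + 2)) * J_coef (nu + 1) k)%C.
Proof.
  pose proof q2_bounds as Hq2.
  unfold J_coef. rewrite qpoch_inf_rec, q_pow_double_succ by lra.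
  replace (q_pow q (2 * nu) * q ^ (2 * k + 2) * (q ^ 2)%R)%C
    with (q_pow q (2 * nu) * q ^ 2 * q ^ (2 * k + 2))%C by (rewrite RtoC_pow; ring).
  ring.
Qed.

Lemma J_series_rec_shift (nu x : C) :
  even_pseries (J_coef nu) x =
  (even_pseries (J_coef (nu + 1)) x - q_pow q (2 * nu) * q ^ 2 * even_pseries (J_coef (nu + 1)) (q * x))%C.
Proof.
  pose proof (is_cseries_lin _ _ _ _ 1 (- (q_pow q (2 * nu) * q ^ 2))%C
                (is_cseries_Cmod _ (ex_series_J_terms (nu + 1) x))
                (is_cseries_Cmod _ (ex_series_J_terms (nu + 1) (q * x)))) as H.
  apply is_cseries_unique in H.
  transitivity (1 * even_pseries (J_coef (nu + 1)) x
                + - (q_pow q (2 * nu) * q ^ 2) * even_pseries (J_coef (nu + 1)) (q * x))%C; [|ring].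
  unfold even_pseries in *. rewrite <- H. f_equal. apply functional_extensionality. intros k.
  rewrite J_coef_rec, Cpow_mult_l, Cpow_add_r. ring.
Qed.

Lemma J_weight_succ (k : nat) :
  (J_weight (S k) * (1 - q ^ (2 * S k)))%C = (- q ^ (2 * S k) * J_weight k)%C.
Proof.
  assert (Hpow : q ^ (2 * S k) < 1) by (apply pow_lt_1_compat; [lra | lia]).
  assert (Hsign : (-1) ^ S k * q ^ (S k * (S k + 1)) = - q ^ (2 * S k) * ((-1) ^ k * q ^ (k * (k + 1)))).
  { replace (S k * (S k + 1))%nat with (2 * S k + k * (k + 1))%nat by lia.
    rewrite pow_add. simpl ((-1) ^ S k). ring. }
  unfold J_weight. rewrite qpoch_S, <- Cpow_S, <- !RtoC_pow, <- pow_mult, Hsign, RtoC_mult, RtoC_opp.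
  field. split.
  - apply qpoch_q2_neq0.
  - rewrite <- RtoC_minus. intros E. apply RtoC_inj in E. lra.
Qed.

Lemma J_coef_succ_diff (nu : C) (k : nat) :
  (J_coef nu (S k) * (1 - q ^ (2 * S k)))%C = (- q ^ (2 * S k) * J_coef (nu + 1) k)%C.
Proof.
  unfold J_coef. rewrite q_pow_double_succ.
  replace (q_pow q (2 * nu) * q ^ 2 * q ^ (2 * k + 2))%C with (q_pow q (2 * nu) * q ^ (2 * S k + 2))%C
    by (replace (2 * S k + 2)%nat with (2 + (2 * k + 2))%nat by lia; rewrite Cpow_add_r; ring).
  transitivity ((J_weight (S k) * (1 - q ^ (2 * S k))) * qpoch_inf (q_pow q (2 * nu) * q ^ (2 * S k + 2)) (q ^ 2))%C;
    [ring|].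
  rewrite J_weight_succ. ring.
Qed.

Lemma J_series_rec_diff (nu x : C) :
  (even_pseries (J_coef nu) x - even_pseries (J_coef nu) (q * x))%C =
  (- q ^ 2 * x ^ 2 * even_pseries (J_coef (nu + 1)) (q * x))%C.
Proof.
  pose proof (is_cseries_incr_1 _ _ (is_cseries_lin _ _ _ _ 1 (-1)
                (is_cseries_Cmod _ (ex_series_J_terms nu x))
                (is_cseries_Cmod _ (ex_series_J_terms nu (q * x))))) as Hdiff.
  pose proof (is_cseries_lin _ _ _ _ (- q ^ 2 * x ^ 2) 0
                (is_cseries_Cmod _ (ex_series_J_terms (nu + 1) (q * x)))
                (is_cseries_Cmod _ (ex_series_J_terms (nu + 1) (q * x)))) as Hrhs.
  apply is_cseries_unique in Hdiff. apply is_cseries_unique in Hrhs.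
  unfold even_pseries in *.
  transitivity (1 * cseries (fun k => J_coef nu k * x ^ (2 * k))
                + -1 * cseries (fun k => J_coef nu k * (q * x) ^ (2 * k))
                - (1 * (J_coef nu 0 * x ^ (2 * 0)) + -1 * (J_coef nu 0 * (q * x) ^ (2 * 0))))%C;
    [simpl; ring|].
  rewrite <- Hdiff.
  transitivity (- q ^ 2 * x ^ 2 * cseries (fun k => J_coef (nu + 1) k * (q * x) ^ (2 * k))
                + 0 * cseries (fun k => J_coef (nu + 1) k * (q * x) ^ (2 * k)))%C; [|ring].
  rewrite <- Hrhs.
  f_equal. apply functional_extensionality. intros k.
  rewrite !Cpow_mult_l.
  transitivity (J_coef nu (S k) * (1 - q ^ (2 * S k)) * x ^ (2 * S k))%C; [ring|].
  rewrite J_coef_succ_diff. replace (2 * S k)%nat with (2 + 2 * k)%nat by lia.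
  rewrite !Cpow_add_r. ring.
Qed.

Lemma J_series_roots_shift (nu x : C) :
  even_pseries (J_coef nu) x = 0 -> even_pseries (J_coef (nu + 1)) x = 0 ->
  even_pseries (J_coef nu) (q * x) = 0 /\ even_pseries (J_coef (nu + 1)) (q * x) = 0.
Proof.
  intros H0 H1.
  assert (Hsucc : even_pseries (J_coef (nu + 1)) (q * x) = 0).
  { pose proof (J_series_rec_shift nu x) as E. rewrite H0, H1 in E.
    apply (Cmult_eq0_cancel_l (q_pow q (2 * nu) * q ^ 2)).
    - apply Cmult_neq_0; [apply cexp_neq0 | apply Cpow_nz; intros E0; apply RtoC_inj in E0; lra].
    - replace (q_pow q (2 * nu) * q ^ 2 * even_pseries (J_coef (nu + 1)) (q * x))%C with
        (0 - (0 - q_pow q (2 * nu) * q ^ 2 * even_pseries (J_coef (nu + 1)) (q * x)))%C by ring.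
      rewrite <- E. ring. }
  split; [|exact Hsucc].
  pose proof (J_series_rec_diff nu x) as E. rewrite H0, Hsucc in E.
  replace (even_pseries (J_coef nu) (q * x)) with (0 - (0 - even_pseries (J_coef nu) (q * x)))%C by ring.
  rewrite E. ring.
Qed.

Lemma J_series_roots_pow (nu x : C) (n : nat) :
  even_pseries (J_coef nu) x = 0 -> even_pseries (J_coef (nu + 1)) x = 0 ->
  even_pseries (J_coef nu) (q ^ n * x) = 0 /\ even_pseries (J_coef (nu + 1)) (q ^ n * x) = 0.
Proof.
  intros H0 H1. induction n as [|n [IH0 IH1]].
  - simpl. now rewrite Cmult_1_l.
  - rewrite Cpow_S, <- Cmult_assoc. apply J_series_roots_shift; assumption.
Qed.

Lemma J_series_succ_small_roots (nu x : C) :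
  x <> 0 -> even_pseries (J_coef nu) x = 0 -> even_pseries (J_coef (nu + 1)) x = 0 ->
  forall eps, 0 < eps -> exists y : C, y <> 0 /\ Cmod y < eps /\ even_pseries (J_coef (nu + 1)) y = 0.
Proof.
  intros Hx H0 H1 eps Heps.
  destruct (pow_mult_small q (Cmod x) eps ltac:(lra) (Cmod_ge_0 x) Heps) as [n Hn].
  exists (q ^ n * x)%C. split; [|split].
  - apply Cmult_neq_0; [apply Cpow_nz; intros E; apply RtoC_inj in E; lra | exact Hx].
  - rewrite Cmod_mult, Cmod_pow, Cmod_R, Rabs_right by lra. lra.
  - apply J_series_roots_pow; assumption.
Qed.

Lemma J_coef_exists_neq0 (nu : C) : exists K, J_coef nu K <> 0.
Proof.
  pose proof q2_bounds as Hq2.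
  set (A := q_pow q (2 * nu)).
  destruct (pow_mult_small q (Cmod A) 1 ltac:(lra) (Cmod_ge_0 A) ltac:(lra)) as [K HK].
  exists K. unfold J_coef. fold A. apply Cmult_neq_0.
  - unfold J_weight. intros E. apply (f_equal Cmod) in E.
    rewrite Cmod_div, Cmod_R, Cmod_0 in E by apply qpoch_q2_neq0.
    assert (Hr : 0 < Rabs ((-1) ^ K * q ^ (K * (K + 1)))).
    { apply Rabs_pos_lt, Rmult_integral_contrapositive.
      split; apply pow_nonzero; lra. }
    pose proof (proj1 (Cmod_gt_0 _) (qpoch_q2_neq0 K)) as HQ.
    pose proof (Rdiv_lt_0_compat _ _ Hr HQ). lra.
  - apply qpoch_inf_neq0; [lra|]. intros n E. apply (f_equal Cmod) in E.
    rewrite Cmod_mult_pow, Cmod_mult_pow, Cmod_1 in E by lra.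
    pose proof (pow_le_pow_anti q K (2 * K + 2) ltac:(lra) ltac:(lia)).
    pose proof (pow_le_1 (q ^ 2) n ltac:(lra)). pose proof (pow_le (q ^ 2) n ltac:(lra)).
    pose proof (pow_le q (2 * K + 2) ltac:(lra)). pose proof (Cmod_ge_0 A).
    assert (Cmod A * q ^ (2 * K + 2) <= Cmod A * q ^ K) by (apply Rmult_le_compat_l; lra).
    assert (0 <= Cmod A * q ^ (2 * K + 2)) by (apply Rmult_le_pos; lra).
    nra.
Qed.

End HahnExton.

Theorem proposition3p8 (q : R) (hq0 : 0 < q) (hq1 : q < 1) (nu : C) :
  ~ (exists x : C, x <> RtoC 0 /\
       hahn_exton_J q nu x = RtoC 0 /\
       hahn_exton_J q (Cplus nu (RtoC 1)) x = RtoC 0).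
Proof.
  intros [x [Hx [H0 H1]]].
  rewrite hahn_exton_J_eq in H0, H1 by exact hq0.
  apply Cmult_eq0_cancel_l in H0; [|apply hahn_exton_prefactor_neq0; assumption].
  apply Cmult_eq0_cancel_l in H1; [|apply hahn_exton_prefactor_neq0; assumption].
  destruct (J_coef_exists_neq0 q hq0 hq1 (nu + 1)) as [K HK].
  apply HK, even_pseries_coef_eq0.
  - apply ex_series_J_coef; assumption.
  - apply (J_series_succ_small_roots q hq0 hq1 nu x Hx H0 H1).
Qed.
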